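(* Let $\mu$ be a shift-ergodic measure with full support on $Q^{\mathbb{Z}}$ and $F$ a cellular automaton over $Q$ admitting a word $w$ as a wall. Then for every word $v\in Q^*$: $v\in L_\mu(F)$ if and only if there exist integers $t,p\geq1$ and words $v_1,v_2,u$ such that $F^t\big({}^\omega(wu)^\omega\big)={}^\omega(v_1vv_2)^\omega$ and $F^p\big({}^\omega(v_1vv_2)^\omega\big)={}^\omega(v_1vv_2)^\omega$.
   Context: A CA $F$ over finite alphabet $Q$ has radius $r$, local rule $\delta$, global map $F(c)_z=\delta(c_{z-r},\dots,c_{z+r})$. $[u]_i=\{c:c_{[i,i+|u|-1]}=u\}$. $L_\mu(F)=\{u:\mu(F^{-t}([u]_0))\not\to0\}$. ${}^\omega x^\omega$ denotes the bi-infinite configuration obtained by repeating the word $x$ periodically. $\mu$ is shift-ergodic if it is shift-invariant and every shift-invariant measurable set has measure 0 or 1; full support means $\mu([u]_0)>0$ for all words $u$. A word $w$ is a wall for $F$ if for all $c,c'\in[w]_0$: (1) if $c_z=c'_z$ for all $z<0$ then $F^t(c)_z=F^t(c')_z$ for all $z<0$ and $t\ge1$; (2) if $c_z=c'_z$ for all $z\ge|w|$ then $F^t(c)_z=F^t(c')_z$ for all $z\ge|w|$ and $t\ge1$. *)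

From HB Require Import structures.
From mathcomp Require Import all_boot all_order all_algebra.
From mathcomp Require Import all_classical all_reals all_analysis.
Set Implicit Arguments. Unset Strict Implicit. Unset Printing Implicit Defensive.
Import Order.TTheory GRing.Theory Num.Theory.
Local Open Scope classical_set_scope.
Local Open Scope ring_scope.

Section CA.
Variable Q : pointedType.

Definition config := int -> Q.

Definition ca_global (r : nat) (delta : (r.*2.+1).-tuple Q -> Q) (c : config)
  : config :=
  fun z => delta [tuple c (z - r%:Z + i%:Z) | i < r.*2.+1].

Definition cyl (u : seq Q) (i : int) : set config :=
  [set c | forall k : nat, (k < size u)%N -> c (i + k%:Z) = nth point u k].

Definition cylinders : set (set config) := [set A | exists u i, A = cyl u i].

Definition CfgSpace := g_sigma_algebraType cylinders.

Definition shift (c : config) : config := fun z => c (z + 1).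

Definition shift_invariant (R : realType) (mu : probability CfgSpace R) :=
  forall A : set CfgSpace, measurable A -> mu (shift @^-1` A) = mu A.

Definition shift_ergodic (R : realType) (mu : probability CfgSpace R) :=
  shift_invariant mu /\
  forall A : set CfgSpace, measurable A -> shift @^-1` A = A ->
    mu A = 0%E \/ mu A = 1%E.

Definition full_support (R : realType) (mu : probability CfgSpace R) :=
  forall u : seq Q, (0 < mu (cyl u 0))%E.

Definition L_mu (R : realType) (mu : probability CfgSpace R)
  (F : config -> config) (u : seq Q) : Prop :=
  ~ ((fun t : nat => mu (iter t F @^-1` cyl u 0)) @ \oo --> 0%E).

Definition wall (F : config -> config) (w : seq Q) : Prop :=
  forall c c' : config, cyl w 0 c -> cyl w 0 c' ->
    ((forall z : int, z < 0 -> c z = c' z) ->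
       forall t : nat, (1 <= t)%N -> forall z : int, z < 0 ->
         iter t F c z = iter t F c' z) /\
    ((forall z : int, (size w)%:Z <= z -> c z = c' z) ->
       forall t : nat, (1 <= t)%N -> forall z : int, (size w)%:Z <= z ->
         iter t F c z = iter t F c' z).

(* ^omega(a::s)^omega : the periodic configuration repeating the nonempty
   word a::s, with position 0 carrying the first letter a *)
Definition omega (a : Q) (s : seq Q) : config :=
  fun z => nth a (a :: s) `|(z %% (size s).+1%:Z)%Z|%N.

End CA.

(* If v shows up in the orbit of ^w(wu)^w once this orbit has become periodic
   in time, say at the times t + k p, then the cylinder of a long window
   w u w u ... w of ^w(wu)^w has positive measure; the walls at its ends freeze
   the evolution in between, so every configuration of that cylinder shows v
   at the times t + k p, and mu(F^-T [v]_0) does not tend to 0.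
   Conversely, by ergodicity w occurs, with probability close to 1, within a
   bounded distance N on both sides of [v]_0.  Between two such walls the
   evolution is that of the periodic configuration repeating the window
   between them; its period is L <= 2N + |w| + |v| + 1, so its orbit becomes
   periodic in time after at most |Q|^L steps.  Hence if no periodic witness
   exists, F^-T [v]_0 avoids the walled configurations for all large T, and
   its measure tends to 0. *)

From Pilot Require Import Defs.
From HB Require Import structures.
From mathcomp Require Import all_boot all_order all_algebra.
From mathcomp Require Import all_classical all_reals all_analysis.
From mathcomp Require Import zify ring lra.
Set Implicit Arguments. Unset Strict Implicit. Unset Printing Implicit Defensive.
Import Order.TTheory GRing.Theory Num.Theory.
Local Open Scope classical_set_scope.
Local Open Scope ring_scope.

Section Dynamics.
Variable Q : pointedType.

Definition translate (k : int) (c : config Q) : config Q := fun z => c (z + k).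

Lemma cyl_translate u i k c : cyl u i (translate k c) <-> cyl u (i + k) c.
Proof.
by split=> H m hm; [rewrite addrAC; apply: H | rewrite /translate addrAC; apply: H].
Qed.

Definition agree (c c' : config Q) (a b : int) :=
  forall z, a <= z < b -> c z = c' z.

Lemma agree_sub c c' a b a' b' : a' <= a -> b <= b' ->
  agree c c' a' b' -> agree c c' a b.
Proof. by move=> ha hb H z /andP[h1 h2]; apply: H; apply/andP; lia. Qed.

Lemma cyl_agree c c' a b u i : agree c c' a b -> a <= i ->
  i + (size u)%:Z <= b -> cyl u i c -> cyl u i c'.
Proof. by move=> H h1 h2 hc k hk; rewrite -H ?hc //; apply/andP; lia. Qed.

Definition periodic (L : int) (c : config Q) := forall z, c (z + L) = c z.

Lemma periodicMn L c : periodic L c -> forall (k : nat) z, c (z + k%:Z * L) = c z.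
Proof.
move=> H; elim=> [|k IH] z; first by rewrite mul0r addr0.
by rewrite -[k.+1]addn1 PoszD mulrDl mul1r addrA H IH.
Qed.

Lemma periodic_modz L c : periodic L c -> 0 < L -> forall z, c z = c (z %% L)%Z.
Proof.
move=> H L0 z; rewrite {1}(divz_eq z L); case: (z %/ L)%Z => k.
  by rewrite addrC periodicMn.
rewrite -(periodicMn H k.+1 (Negz k * L + (z %% L)%Z)); congr c.
by rewrite NegzE; ring.
Qed.

Lemma omega_periodic (a : Q) s : periodic (size s).+1%:Z (omega a s).
Proof. by move=> z; rewrite /omega modzDr. Qed.

Lemma omegaE (a : Q) s (z : int) : 0 <= z < (size s).+1%:Z ->
  omega a s z = nth a (a :: s) `|z|%N.
Proof. by move=> h; rewrite /omega modz_small. Qed.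

Lemma cyl_periodicMn L u i c : periodic L c -> cyl u i c ->
  forall k : nat, cyl u (i + k%:Z * L) c.
Proof. by move=> pc H k m hm; rewrite addrAC periodicMn //; apply: H. Qed.

Lemma periodic_eq (L : nat) c c' : (0 < L)%N -> periodic L c -> periodic L c' ->
  (forall k : nat, (k < L)%N -> c k%:Z = c' k%:Z) -> c = c'.
Proof.
move=> L0 pc pc' H; apply: funext => z.
have L0' : 0 < L%:Z by rewrite ltz_nat.
rewrite (periodic_modz pc L0') (periodic_modz pc' L0').
have := modz_ge0 z (lt0r_neq0 L0'); have := ltz_pmod z L0'.
by move=> hlt hge; rewrite -(gez0_abs hge); apply: H; lia.
Qed.

Definition window (c : config Q) (i : int) (n : nat) : seq Q :=
  [seq c (i + k%:Z) | k <- iota 0 n].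

Lemma size_window c i n : size (window c i n) = n.
Proof. by rewrite size_map size_iota. Qed.

Lemma nth_window x c i n k : (k < n)%N -> nth x (window c i n) k = c (i + k%:Z).
Proof. by move=> hk; rewrite (nth_map 0%N) ?size_iota // nth_iota. Qed.

Lemma window_cat c i m n :
  window c i (m + n) = window c i m ++ window c (i + m%:Z) n.
Proof.
rewrite /window iotaD map_cat add0n -[m]addn0 iotaDl -map_comp addn0.
by congr (_ ++ _); apply: eq_map => k /=; rewrite PoszD addrA.
Qed.

Lemma window_cyl u i c : cyl u i c <-> window c i (size u) = u.
Proof.
split=> [H | <- k hk].
  apply: (@eq_from_nth _ point) => [|k]; rewrite size_window // => hk.
  by rewrite nth_window ?H.
by rewrite nth_window // -(size_window c i (size u)).
Qed.

Lemma agree_window c c' i n : cyl (window c i n) i c' -> agree c c' i (i + n%:Z).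
Proof.
move=> H z /andP[h1 h2]; have hk : (`|z - i|%N < n)%N by lia.
have := H `|z - i|%N; rewrite size_window => /(_ hk).
by rewrite nth_window // gez0_abs ?subr_ge0 // subrKC => ->.
Qed.

Lemma agree_omega_window c L a s : window c 0 L = a :: s -> agree c (omega a s) 0 L%:Z.
Proof.
move=> hw z /andP[h1 h2].
have hL : L = (size s).+1 by rewrite -(size_window c 0 L) hw.
rewrite omegaE; last by rewrite -hL h1 h2.
have hk : (`|z|%N < L)%N by lia.
by rewrite -hw nth_window // add0r gez0_abs.
Qed.

Lemma omega_window (L : nat) d a s : periodic L d -> window d 0 L = a :: s ->
  omega a s = d.
Proof.
move=> pd hw; have hL : L = (size s).+1 by rewrite -(size_window d 0 L) hw.
apply: (@periodic_eq L) => // [||k hk]; first by rewrite hL.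
  by rewrite hL; apply: omega_periodic.
by symmetry; apply: (agree_omega_window hw); apply/andP; lia.
Qed.

Lemma periodic_omega_word (L : nat) d (m : int) (v : seq Q) : (0 < L)%N ->
  periodic L%:Z d -> 0 <= m -> m + (size v)%:Z <= L%:Z -> cyl v m d ->
  exists v1 v2 b s', v1 ++ v ++ v2 = b :: s' /\ omega b s' = d.
Proof.
move=> L0 pd m0 hm hv.
have hL : L = (`|m| + (size v + (L - `|m| - size v)))%N by lia.
set v2 := window d (m + (size v)%:Z) (L - `|m| - size v).
have E : window d 0 L = window d 0 `|m| ++ v ++ v2.
  by rewrite {1}hL !window_cat add0r gez0_abs // (window_cyl _ _ _).1 //.
case hD : (window d 0 L) E => [|b s'] E.
  by move: (size_window d 0 L); rewrite hD /=; lia.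
by exists (window d 0 `|m|), v2, b, s'; split; [rewrite E | exact: omega_window pd hD].
Qed.

Lemma cyl_omega (u1 u u2 : seq Q) (b : Q) s :
  u1 ++ u ++ u2 = b :: s -> cyl u (size u1) (omega b s).
Proof.
move=> h k hk; have := congr1 size h; rewrite !size_cat /= => hs.
rewrite omegaE; last by apply/andP; lia.
rewrite -PoszD absz_nat -h nth_cat ltnNge leq_addr /= addKn nth_cat hk.
exact: set_nth_default.
Qed.

Definition walled_periodic_orbit (F : config Q -> config Q) (w v : seq Q) : Prop :=
  exists (t p : nat) (v1 v2 u : seq Q) (a b : Q) (s s' : seq Q),
    [/\ (1 <= t)%N, (1 <= p)%N,
        w ++ u = a :: s /\ v1 ++ v ++ v2 = b :: s',
        iter t F (omega a s) = omega b s' &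
        iter p F (omega b s') = omega b s'].

Definition occurs_within (w : seq Q) (m : int) (N : nat) : set (config Q) :=
  \bigcup_(k in `I_N.+1) cyl w (m + k%:Z).

(* The right wall starts at |v|+1, not |v|, so that the window between the two
   walls is never empty. *)
Definition walled (w v : seq Q) (N : nat) : set (config Q) :=
  occurs_within w (- (size w)%:Z - N%:Z) N `&` occurs_within w (size v).+1%:Z N.

Section CellularAutomaton.
Variables (r : nat) (delta : (r.*2.+1).-tuple Q -> Q).
Local Notation F := (ca_global delta).

Lemma ca_translate k c : F (translate k c) = translate k (F c).
Proof.
apply: funext => z; rewrite /ca_global /translate; congr delta.
by apply: eq_mktuple => i; congr c; ring.
Qed.

Lemma iter_ca_translate t k c : iter t F (translate k c) = translate k (iter t F c).
Proof. by elim: t => //= t ->; rewrite ca_translate. Qed.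

Lemma ca_agree c c' a b : agree c c' (a - r%:Z) (b + r%:Z) ->
  agree (F c) (F c') a b.
Proof.
move=> H z /andP[h1 h2]; rewrite /ca_global; congr delta; apply: eq_mktuple => i.
have hi : (nat_of_ord i < (r * 2).+1)%N by rewrite muln2 ltn_ord.
by apply: H; apply/andP; lia.
Qed.

Lemma iter_ca_agree t c c' a b :
  agree c c' (a - (r * t)%N%:Z) (b + (r * t)%N%:Z) ->
  agree (iter t F c) (iter t F c') a b.
Proof.
elim: t a b => [|t IH] a b H /=; first by apply: agree_sub H; lia.
by apply: ca_agree; apply: IH; apply: agree_sub H; lia.
Qed.

Lemma iter_ca_periodic L t c : periodic L c -> periodic L (iter t F c).
Proof.
move=> H z; have hL : translate L c = c by apply: funext => y; apply: H.
by rewrite -[in RHS]hL iter_ca_translate.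
Qed.

Section FiniteAlphabet.
Variable sQ : seq Q.
Hypothesis allQ : forall q : Q, q \in sQ.

Lemma size_alphabet_gt0 : (0 < size sQ)%N.
Proof. exact: leq_ltn_trans (leq0n _) (etrans (index_mem point sQ) (allQ point)). Qed.

Definition letter_index (q : Q) : 'I_(size sQ) :=
  Ordinal (etrans (index_mem q sQ) (allQ q)).

Lemma letter_index_inj : injective letter_index.
Proof.
move=> q q' /(congr1 (fun i : 'I_(size sQ) => nth point sQ i)) /=.
by rewrite !nth_index.
Qed.

(* Pigeonhole on the at most |Q|^L spatially L-periodic configurations. *)
Lemma iter_ca_eventually_periodic (L : nat) e : (0 < L)%N -> periodic L%:Z e ->
  exists n p, [/\ (n <= size sQ ^ L)%N, (0 < p)%N & iter (p + n) F e = iter n F e].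
Proof.
move=> L0 pe.
pose g (k : 'I_(size sQ ^ L).+1) : {ffun 'I_L -> 'I_(size sQ)} :=
  [ffun j : 'I_L => letter_index (iter k F e j%:Z)].
have /injectivePn [k1 [k2 hne hg]] : ~~ injectiveb g.
  apply/negP => /injectiveP /leq_card; rewrite card_ffun !card_ord.
  by rewrite ltnn.
have {}hg : iter k1 F e = iter k2 F e.
  apply: (periodic_eq L0); [exact: iter_ca_periodic | exact: iter_ca_periodic |].
  move=> j hj; apply: letter_index_inj.
  have := congr1 (fun f : {ffun 'I_L -> 'I_(size sQ)} => f (Ordinal hj)) hg.
  by rewrite !ffunE.
have k1k2 : val k1 != val k2 by [].
case: (ltngtP k1 k2) k1k2 => [lt|lt|/eqP] // _.
- exists k1, (k2 - k1)%N; split; first by rewrite -ltnS.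
    by rewrite subn_gt0.
  by rewrite subnK ?(ltnW lt).
- exists k2, (k1 - k2)%N; split; first by rewrite -ltnS.
    by rewrite subn_gt0.
  by rewrite subnK ?(ltnW lt).
Qed.

Lemma walled_periodic_orbit_of_omega (w v u : seq Q) a s (m : int) T :
  w ++ u = a :: s -> 0 <= m -> m + (size v)%:Z <= (size s).+1%:Z ->
  (size sQ ^ (size s).+1 <= T)%N -> cyl v m (iter T F (omega a s)) ->
  walled_periodic_orbit F w v.
Proof.
move=> hwu m0 hm hT hv.
have [n [p [hn p0 hnp]]] :=
  iter_ca_eventually_periodic (ltn0Sn (size s)) (omega_periodic a s).
have hnT : (n <= T)%N := leq_trans hn hT.
set d := iter T F (omega a s).
have dfix : iter p F d = d.
  rewrite /d -iterD (_ : (p + T = T - n + (p + n))%N); last by lia.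
  by rewrite iterD hnp -iterD subnK.
have pd : periodic (size s).+1%:Z d by apply: iter_ca_periodic; apply: omega_periodic.
have [v1 [v2 [b [s' [hv' hd]]]]] := periodic_omega_word (ltn0Sn _) pd m0 hm hv.
exists T, p, v1, v2, u, a, b, s, s'; split => //; try by rewrite hd.
by apply: leq_trans hT; rewrite expn_gt0 size_alphabet_gt0.
Qed.

Section Walls.
Variable w : seq Q.
Hypothesis hw : wall F w.

Lemma wall_translate i c c' : cyl w i c -> cyl w i c' ->
  ((forall z, z < i -> c z = c' z) ->
     forall t z, z < i -> iter t F c z = iter t F c' z) /\
  ((forall z, i + (size w)%:Z <= z -> c z = c' z) ->
     forall t z, i + (size w)%:Z <= z -> iter t F c z = iter t F c' z).
Proof.
have at0 x : cyl w i x -> cyl w 0 (translate i x).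
  by move=> hx; apply/cyl_translate; rewrite add0r.
move=> /at0 hc /at0 hc'; have [h1 h2] := hw hc hc'.
split=> H [|t] z hz //=; first exact: H.
- have := h1 _ t.+1 (ltn0Sn t) (z - i); rewrite !iter_ca_translate /translate /= subrK.
  by apply=> [y hy|]; [apply: H; lia | lia].
- exact: H.
- have := h2 _ t.+1 (ltn0Sn t) (z - i); rewrite !iter_ca_translate /translate /= subrK.
  by apply=> [y hy|]; [apply: H; lia | lia].
Qed.

(* Splice c'' := c left of i and c' from i on: the wall at j makes c and c''
   evolve alike left of j, the wall at i makes c'' and c' evolve alike right
   of the wall at i. *)
Lemma walls_isolate c c' i j : cyl w i c -> cyl w i c' -> cyl w j c -> cyl w j c' ->
  agree c c' i j -> forall t, agree (iter t F c) (iter t F c') (i + (size w)%:Z) j.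
Proof.
move=> ci ci' cj cj' hag t z /andP[h1 h2].
pose c'' : config Q := fun z => if z < i then c z else c' z.
have c''i : cyl w i c'' by move=> k hk; rewrite /c''; case: ifP => h; [lia|apply: ci'].
have c''j : cyl w j c'' by move=> k hk; rewrite /c''; case: ifP => h; [lia|apply: cj'].
have [left _] := wall_translate cj c''j.
have [_ right] := wall_translate c''i ci'.
rewrite (left _ t z h2); last first.
  move=> y hy; rewrite /c''; case: ifP => // hyi.
  by apply: hag; apply/andP; split; [lia|].
by apply: right => // y hy; rewrite /c''; case: ifP => //; lia.
Qed.

Lemma omega_between_walls (v : seq Q) c (L : nat) (m : int) T :
  (0 < L)%N -> cyl w 0 c -> cyl w L%:Z c ->
  (size w)%:Z <= m -> m + (size v)%:Z <= L%:Z -> cyl v m (iter T F c) ->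
  exists a s u, [/\ w ++ u = a :: s, (size s).+1 = L &
                    cyl v m (iter T F (omega a s))].
Proof.
move=> L0 c0 cL hm hmL hv.
case hP : (window c 0 L) => [|a s].
  by move: (size_window c 0 L); rewrite hP /=; lia.
have hL : (size s).+1 = L by rewrite -(size_window c 0 L) hP.
have ag := agree_omega_window hP.
have hwL : (size w <= L)%N by lia.
have e0 : cyl w 0 (omega a s) by apply: cyl_agree ag _ _ c0; lia.
have eL : cyl w L%:Z (omega a s).
  by have := cyl_periodicMn (omega_periodic a s) e0 1; rewrite mul1r add0r hL.
exists a, s, (window c (size w) (L - size w)); split => //.
  by rewrite -hP -{2}(subnKC hwL) window_cat add0r (window_cyl _ _ _).1.
by apply: cyl_agree (walls_isolate c0 e0 cL eL ag T) _ _ hv; lia.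
Qed.

Lemma pre_cyl_of_walled_window (v : seq Q) e c (n : nat) (j : int) T :
  cyl w 0 e -> cyl w n%:Z e -> (size w)%:Z <= j -> j + (size v)%:Z <= n%:Z ->
  cyl v j (iter T F e) -> cyl (window e 0 (n + size w)) (- j) c ->
  cyl v 0 (iter T F c).
Proof.
move=> e0 en hj hjn hv hc; set c' := translate (- j) c.
have ag : agree e c' 0 (n + size w)%N%:Z.
  have := @agree_window e c' 0 (n + size w); rewrite add0r; apply.
  by apply/cyl_translate; rewrite add0r.
have c'0 : cyl w 0 c' by apply: cyl_agree ag _ _ e0; lia.
have c'n : cyl w n%:Z c' by apply: cyl_agree ag _ _ en; lia.
have iso := walls_isolate e0 c'0 en c'n (agree_sub (lexx 0) _ ag) T.
have : cyl v j (iter T F c') by apply: cyl_agree (iso _) _ _ hv; lia.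
by rewrite iter_ca_translate cyl_translate subrr.
Qed.

Lemma walled_periodic_orbit_window (v : seq Q) : walled_periodic_orbit F w v ->
  exists (P : seq Q) (j : int) (t p : nat),
    (0 < p)%N /\ forall k c, cyl P j c -> cyl v 0 (iter (k * p + t) F c).
Proof.
case=> t [p [v1 [v2 [u [a [b [s [s' [_ p0 [hwu hv] ht hp]]]]]]]]].
have := congr1 size hwu; have := congr1 size hv; rewrite !size_cat /= => sv sw.
(* n is a multiple of the period M, large enough for the copy of v at
   M + |v1|, just past the left wall, to end before the wall at n. *)
set M := (size s).+1; set n := (M * (size s').+2)%N.
have e0 : cyl w 0 (omega a s) by apply: (@cyl_omega [::] w u); rewrite cat0s.
have en : cyl w n%:Z (omega a s).
  have := cyl_periodicMn (omega_periodic a s) e0 (size s').+2.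
  by rewrite add0r -PoszM mulnC.
have pd : periodic M%:Z (omega b s').
  by rewrite -ht; apply: iter_ca_periodic; apply: omega_periodic.
exists (window (omega a s) 0 (n + size w)), (- (M + size v1)%N%:Z), t, p.
split=> // k c; apply: pre_cyl_of_walled_window e0 en _ _ _.
- by lia.
- have : ((size s').+1 <= M * (size s').+1)%N by rewrite leq_pmull.
  by rewrite /n mulnS; lia.
- rewrite iterD iterM ht (iter_fix _ hp).
  have := cyl_periodicMn pd (cyl_omega hv) 1.
  by rewrite mul1r PoszD addrC.
Qed.

Lemma walled_periodic_orbit_of_pre_cyl (v : seq Q) (N T : nat) c :
  (size sQ ^ (size w + size v + N.*2).+1 <= T)%N ->
  walled w v N c -> cyl v 0 (iter T F c) -> walled_periodic_orbit F w v.
Proof.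
move=> hT [[k1 /= hk1 cl] [k2 /= hk2 cr]] hv.
set i := - (size w)%:Z - N%:Z + k1%:Z.
set L := (size v + k2 + size w + N - k1).+1.
have hiL : L%:Z + i = (size v).+1%:Z + k2%:Z by rewrite /L /i; lia.
have := @omega_between_walls v (translate i c) L (- i) T (ltn0Sn _).
case=> [||||| a [s [u [hwu hs he]]]].
- by apply/cyl_translate; rewrite add0r.
- by apply/cyl_translate; rewrite hiL.
- by rewrite /i; lia.
- by rewrite /i /L; lia.
- by rewrite iter_ca_translate; apply/cyl_translate; rewrite addNr.
apply: walled_periodic_orbit_of_omega hwu _ _ _ he; rewrite ?hs;
  try by rewrite /i /L; lia.
by apply: leq_trans hT; apply: leq_pexp2l; [exact: size_alphabet_gt0 | rewrite /L; lia].
Qed.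

End Walls.

End FiniteAlphabet.

End CellularAutomaton.

End Dynamics.

Section ExtendedRealSequences.
Variable R : realType.
Local Open Scope ereal_scope.

Lemma nneseq_cvg0 (f : nat -> \bar R) : (forall n, 0 <= f n) ->
  (forall e : R, (0 < e)%R -> exists N, forall n, (N <= n)%N -> f n <= e%:E) ->
  f @ \oo --> 0.
Proof.
move=> f0 small; have [N1 f1] := small 1%R ltr01.
have fin n : (N1 <= n)%N -> f n \is a fin_num.
  by move=> hn; rewrite ge0_fin_numE ?f0 // (le_lt_trans (f1 _ hn)) ?ltry.
apply/fine_cvgP; split; first by exists N1.
apply/cvgrPdist_le => e e0; have [N hN] := small e e0.
exists (maxn N N1) => // n /= hn; rewrite sub0r normrN ger0_norm ?fine_ge0 //.
by rewrite -lee_fin fineK ?fin ?hN //; lia.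
Qed.

Lemma not_cvg0_along_progression (f : nat -> \bar R) (c : \bar R) (p t : nat) :
  (0 < p)%N -> 0 < c -> (forall k, c <= f (k * p + t)%N) -> ~ f @ \oo --> 0.
Proof.
move=> p0 c0 hf f0.
have : f \o (addn^~ t \o muln^~ p) @ \oo --> 0.
  exact: cvg_comp _ _ (cvg_comp _ _ (cvg_mulnr _ p0) (cvg_addnr t)) f0.
by move/(cvge_ge (nearW _ hf)); rewrite leNgt c0.
Qed.

End ExtendedRealSequences.

Section Measure.
Variable Q : pointedType.
Variable sQ : seq Q.
Hypothesis allQ : forall q : Q, q \in sQ.
Local Notation shift := (@Defs.shift Q).

Lemma cyl_measurable u i : measurable (cyl u i : set (CfgSpace Q)).
Proof. by apply: sub_gen_smallest; exists u, i. Qed.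

Definition local_set (S : set (config Q)) (a : int) (L : nat) :=
  forall c c', agree c c' a (a + L%:Z) -> S c -> S c'.

(* Induction on the width of the window: split on the letter at its left end. *)
Lemma local_set_measurable L : forall S a, local_set S a L ->
  measurable (S : set (CfgSpace Q)).
Proof.
elim: L => [|L IH] S a hS.
  have [[c0 Sc0]|S0] := pselect (exists c, S c).
    suff -> : S = setT by exact: measurableT.
    by apply/seteqP; split=> // c _; apply: (hS c0) => // z; lia.
  suff -> : S = set0 by exact: measurable0.
  by apply/seteqP; split=> // c Sc; apply: S0; exists c.
pose upd (c : config Q) (q : Q) : config Q := fun z => if z == a then q else c z.
pose Sq (q : Q) : set (config Q) := [set c | S (upd c q)].
have updK c : upd c (c a) = c by apply: funext => z; rewrite /upd; case: eqP => // ->.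
have -> : S = \big[setU/set0]_(q <- sQ) (cyl [:: q] a `&` Sq q).
  rewrite -bigcup_seq; apply/seteqP; split=> c.
    move=> Sc; exists (c a); first exact: allQ.
    by split; [case=> //= _; rewrite addr0 | rewrite /Sq /= updK].
  move=> [q _ [cq]]; rewrite /Sq /= (_ : q = c a) ?updK //.
  by have := cq 0%N isT; rewrite addr0.
apply: bigsetU_measurable => q _; apply: measurableI; first exact: cyl_measurable.
apply: (IH _ (a + 1)) => c c' hcc'; rewrite /Sq /=; apply: hS => z hz.
by rewrite /upd; case: eqP => // hza; apply: hcc'; lia.
Qed.

Lemma pre_cyl_measurable r (delta : (r.*2.+1).-tuple Q -> Q) T (v : seq Q) :
  measurable (iter T (ca_global delta) @^-1` cyl v 0 : set (CfgSpace Q)).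
Proof.
apply: (@local_set_measurable (size v + 2 * (r * T)) _ (- (r * T)%N%:Z)).
move=> c c' hag hc; apply: cyl_agree (iter_ca_agree _ _) _ _ hc; rewrite ?lexx //.
by apply: agree_sub hag; lia.
Qed.

Lemma occurs_within_measurable w m N :
  measurable (occurs_within w m N : set (CfgSpace Q)).
Proof. by apply: bigcup_measurable => k _; exact: cyl_measurable. Qed.

Lemma walled_measurable w v N : measurable (walled w v N : set (CfgSpace Q)).
Proof. by apply: measurableI; exact: occurs_within_measurable. Qed.

Lemma shift_preimage_cyl (u : seq Q) i : shift @^-1` cyl u i = cyl u (i + 1).
Proof. by apply/seteqP; split=> c; rewrite /preimage /= -(cyl_translate u i 1 c). Qed.

Section ErgodicMeasure.
Variable R : realType.
Variable mu : probability (CfgSpace Q) R.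
Hypothesis herg : shift_ergodic mu.

Lemma mu_shift_family (G : int -> set (config Q)) :
  (forall m, measurable (G m : set (CfgSpace Q))) ->
  (forall m, shift @^-1` G m = G (m + 1)) ->
  forall m, mu (G m) = mu (G 0).
Proof.
move=> mG sG.
have step m : mu (G (m + 1)) = mu (G m) by rewrite -sG herg.1.
have pos (n : nat) : mu (G n%:Z) = mu (G 0).
  by elim: n => // n IH; rewrite -[n.+1]addn1 PoszD step.
have neg (n : nat) : mu (G (- n%:Z)) = mu (G 0).
  elim: n => // n IH; rewrite -IH -[n.+1]addn1 PoszD.
  by rewrite -(step (- (n%:Z + 1%:Z))); congr (mu (G _)); ring.
by case=> n; [exact: pos | rewrite NegzE neg].
Qed.

Lemma mu_cyl u i : mu (cyl u i) = mu (cyl u 0).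
Proof.
apply: (@mu_shift_family (cyl u)) => m; first exact: cyl_measurable.
exact: shift_preimage_cyl.
Qed.

Lemma mu_occurs_within w m N : mu (occurs_within w m N) = mu (occurs_within w 0 N).
Proof.
apply: (@mu_shift_family (occurs_within w ^~ N)) => {}m.
  exact: occurs_within_measurable.
apply/seteqP; split=> c [k hk]; rewrite /preimage /=.
  by rewrite cyl_translate addrAC => h; exists k.
by rewrite -addrAC -cyl_translate => h; exists k.
Qed.

(* The intersection is shift-invariant, so it has measure 0 or 1; by continuity
   from above it has the same positive measure as every G k. *)
Lemma ergodic_nonincreasing_one (G : (set (config Q))^nat) :
  (forall k, measurable (G k : set (CfgSpace Q))) ->
  (forall k, mu (G k) = mu (G 0%N)) -> (forall k, G k.+1 `<=` G k) ->
  shift @^-1` (\bigcap_k G k) = \bigcap_k G k ->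
  (0 < mu (G 0%N))%E -> mu (G 0%N) = 1%E.
Proof.
move=> mG cG dG sH pos.
have mH : measurable (\bigcap_k G k : set (CfgSpace Q)) by exact: bigcapT_measurable.
have fin : (mu (G 0%N) < +oo)%E.
  by apply: (le_lt_trans (probability_le1 mu (mG 0%N))); rewrite ltry.
have dec : nonincreasing_seq G.
  by apply/nonincreasing_seqP => n; apply/subsetPset; exact: dG.
have := nonincreasing_cvg_mu fin mG mH dec.
have -> : mu \o G = fun=> mu (G 0%N) by apply: funext => k /=; rewrite cG.
move=> /(cvg_lim (@ereal_hausdorff R)); rewrite lim_cst // => hH.
by case: (herg.2 _ mH sH); rewrite -hH // => h0; move: pos; rewrite h0 ltxx.
Qed.

Hypothesis hfs : full_support mu.
Variable w : seq Q.

Lemma mu_occurs_somewhere_after : mu (\bigcup_k cyl w k%:Z) = 1%E.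
Proof.
pose G (m : int) := \bigcup_k cyl w (m + k%:Z).
have mG m : measurable (G m : set (CfgSpace Q)).
  by apply: bigcupT_measurable => k; exact: cyl_measurable.
have sG m c : G m (shift c) <-> G (m + 1) c.
  by split=> -[k _ hk]; exists k => //; move: hk; rewrite /= cyl_translate addrAC.
have sGset m : shift @^-1` G m = G (m + 1).
  by apply/seteqP; split=> c; [exact: (sG m c).1 | exact: (sG m c).2].
have decG m : G (m + 1) `<=` G m.
  move=> c [j _ h]; exists j.+1 => //.
  by have -> : m + j.+1%:Z = m + 1 + j%:Z by lia.
have -> : \bigcup_k cyl w k%:Z = G 0 by apply: eq_bigcupr => k _; rewrite add0r.
apply: (@ergodic_nonincreasing_one (fun k : nat => G k)) => //.
- by move=> k; rewrite (mu_shift_family mG sGset).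
- by move=> k; rewrite -addn1 PoszD; exact: decG.
- apply/seteqP; split=> c H k _; first by apply: decG; apply/sG; exact: H.
  by apply/sG; have := H k.+1 I; rewrite -addn1 PoszD.
- apply: (lt_le_trans (hfs w)); apply: le_measure; rewrite ?inE ?mG //.
    exact: cyl_measurable.
  by move=> c h; exists 0%N => //; rewrite addr0.
Qed.

Lemma mu_occurs_within_cvg1 : mu (occurs_within w 0 N) @[N --> \oo] --> 1%E.
Proof.
rewrite -mu_occurs_somewhere_after.
have -> : \bigcup_k cyl w k%:Z = \bigcup_N occurs_within w 0 N.
  apply/seteqP; split=> c [k _ h].
    by exists k => //; exists k => /=; rewrite ?add0r.
  by case: h => j _ h; exists j => //; rewrite -[j%:Z]add0r.
apply: nondecreasing_cvg_mu => [N||]; first exact: occurs_within_measurable.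
  by apply: bigcupT_measurable => N; exact: occurs_within_measurable.
apply/nondecreasing_seqP => N; apply/subsetPset => c [k hk h].
by exists k => //=; move: hk => /= /ltnW.
Qed.

(* Union bound: mu (~` walled w v N) <= 2 (1 - mu (occurs_within w 0 N)). *)
Lemma mu_not_walled_small (v : seq Q) (e : R) : 0 < e ->
  exists N, (mu (~` walled w v N) <= e%:E)%E.
Proof.
move=> e0; have [_ cv] := (fine_cvgP _ _).1 mu_occurs_within_cvg1.
have [N _ hN] := cvgr_ge _ cv (1 - e / 2) ltac:(lra).
exists N; have := hN N (leqnn N) => /= hge.
have fin : mu (occurs_within w 0 N) \is a fin_num.
  by apply: fin_num_measure; exact: occurs_within_measurable.
have mC m : measurable (~` occurs_within w m N : set (CfgSpace Q)).
  by apply: measurableC; exact: occurs_within_measurable.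
rewrite /walled; set A := occurs_within _ _ _; set B := occurs_within _ _ _.
rewrite setCI; apply: le_trans (measureU2 mu (mC _) (mC _)) _.
change (mu (~` A) + mu (~` B) <= e%:E)%E.
rewrite !(probability_setC mu (occurs_within_measurable _ _ _)) !mu_occurs_within.
by rewrite -(fineK fin) -EFinB -EFinD lee_fin; lra.
Qed.

Section WalledAutomaton.
Variables (r : nat) (delta : (r.*2.+1).-tuple Q -> Q).
Local Notation F := (ca_global delta).
Hypothesis hw : wall F w.

Lemma walled_periodic_orbit_of_L_mu (v : seq Q) :
  L_mu mu F v -> walled_periodic_orbit F w v.
Proof.
move=> hL; apply: contrapT => hnot; apply: hL.
apply: nneseq_cvg0 => [T | e e0]; first exact: measure_ge0.
have [N hN] := mu_not_walled_small v e0.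
exists (size sQ ^ (size w + size v + N.*2).+1)%N => T hT; apply: le_trans hN.
apply: le_measure; rewrite ?inE; first exact: pre_cyl_measurable.
  by apply: measurableC; exact: walled_measurable.
by move=> c hc hwc; apply: hnot; exact: walled_periodic_orbit_of_pre_cyl hT hwc hc.
Qed.

Lemma L_mu_of_walled_periodic_orbit (v : seq Q) :
  walled_periodic_orbit F w v -> L_mu mu F v.
Proof.
case/(walled_periodic_orbit_window hw) => P [j [t [p [p0 hP]]]].
apply: (not_cvg0_along_progression (t := t) p0 (hfs P)) => k.
rewrite -(mu_cyl P j); apply: le_measure; rewrite ?inE.
- exact: cyl_measurable.
- exact: pre_cyl_measurable.
- by move=> c /(hP k).
Qed.

End WalledAutomaton.

End ErgodicMeasure.

End Measure.

Theorem proposition1 (Q : pointedType) (hQ : finite_set [set: Q])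
  (R : realType) (mu : probability (CfgSpace Q) R)
  (r : nat) (delta : (r.*2.+1).-tuple Q -> Q) (w : seq Q) :
  shift_ergodic mu -> full_support mu -> wall (ca_global delta) w ->
  forall v : seq Q,
    L_mu mu (ca_global delta) v <->
    exists (t p : nat) (v1 v2 u : seq Q) (a b : Q) (s s' : seq Q),
      [/\ (1 <= t)%N, (1 <= p)%N,
          w ++ u = a :: s /\ v1 ++ v ++ v2 = b :: s',
          iter t (ca_global delta) (omega a s) = omega b s' &
          iter p (ca_global delta) (omega b s') = omega b s'].
Proof.
move=> herg hfs hw v.
have [sQ allQ] : exists sQ : seq Q, forall q, q \in sQ.
  have [sQ hs] := (finite_seqP _).1 hQ.
  by exists sQ => q; have : [set: Q] q by []; rewrite hs.
split; first exact: (walled_periodic_orbit_of_L_mu allQ herg hfs hw).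
exact: (L_mu_of_walled_periodic_orbit allQ herg hfs hw).
Qed.
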